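(* For every integer $n\ge 3$ and every graph $G$, \[ \kappa'(G\times K_n)=\min\{\,n(n-1)\kappa'(G),\ (n-1)\delta(G)\,\}. \]
   Context: All graphs are finite, simple and undirected. $\kappa'(G)$ denotes the edge connectivity of $G$, the minimum number of edges whose removal disconnects $G$; it is $0$ if $G$ is disconnected or has only one vertex. $\delta(G)$ is the minimum degree of $G$ and $K_n$ is the complete graph on $n$ vertices. The direct product $G\times H$ has vertex set $V(G)\times V(H)$. Two vertices $(x,u),(y,v)$ are adjacent if and only if $xy\in E(G)$ and $uv\in E(H)$. *)

(* Simple graphs = symmetric irreflexive relations on a finType. *)
From HB Require Import structures.
From mathcomp Require Import all_boot.
Set Implicit Arguments. Unset Strict Implicit. Unset Printing Implicit Defensive.

Section Graphs.
Variable T : finType.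
Implicit Types (e : rel T).

Definition edges e : {set {set T}} :=
  [set [set p.1; p.2] | p in [set p : T * T | e p.1 p.2]].

Definition remove_edges e (F : {set {set T}}) : rel T :=
  fun x y => e x y && ([set x; y] \notin F).

Definition connectedb e : bool := [forall x, forall y, connect e x y].

(* Edge connectivity: 0 if at most one vertex, otherwise the minimum size of
   an edge set whose deletion disconnects the graph (F = all edges always
   qualifies, so the minimum below is attained; a disconnected graph gives 0). *)
Definition edge_conn e : nat :=
  if #|T| <= 1 then 0
  else \big[minn/#|edges e|]_(F in powerset (edges e) | ~~ connectedb (remove_edges e F)) #|F|.

Definition degree e (x : T) : nat := #|[set y | e x y]|.

Definition min_deg e : nat := \big[minn/#|T|]_(x : T) degree e x.
End Graphs.

Definition Kn_rel (n : nat) : rel 'I_n := fun i j => i != j.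

Definition direct_prod (T1 T2 : finType) (e1 : rel T1) (e2 : rel T2) : rel (T1 * T2)%type :=
  fun p q => e1 p.1 q.1 && e2 p.2 q.2.
Arguments Kn_rel n : clear implicits.

From mathcomp Require Import all_boot.
Set Implicit Arguments. Unset Strict Implicit. Unset Printing Implicit Defensive.

(* An edge cut of G x K_n of minimum size is the set of edges leaving a vertex
   set S. If S is a union of fibres A x V(K_n), every edge of G leaving A lifts
   to n(n-1) cut edges, so the cut has at least n(n-1)κ'(G) edges. Otherwise
   some fibre {x} x V(K_n) meets both S and its complement; as n >= 3, for each
   neighbour y of x all but at most one vertex (y, j) is joined to a vertex of
   that fibre on the other side of the cut, which gives (n-1)deg(x) cut edges.
   Both bounds are attained: by the fibres over a minimum cut of G, and by the
   edges at a vertex (x, i) with deg(x) = δ(G). *)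

Lemma bigmin_le (I : finType) (P : pred I) (F : I -> nat) m i :
  P i -> \big[minn/m]_(j | P j) F j <= F i.
Proof.
move=> Pi; rewrite -big_filter.
have : i \in [seq j <- index_enum I | P j] by rewrite mem_filter Pi mem_index_enum.
elim: [seq j <- index_enum I | P j] => //= a s IHs; rewrite big_cons inE.
case/orP => [/eqP <-|/IHs]; first exact: geq_minl.
exact: leq_trans (geq_minr _ _).
Qed.

Lemma bigmin_ind (I : finType) (P : pred I) (F : I -> nat) m (K : nat -> Prop) :
  K m -> (forall i, P i -> K (F i)) -> K (\big[minn/m]_(i | P i) F i).
Proof. by move=> Km KF; apply: big_ind => // a b Ka Kb; case: (leqP a b). Qed.

Lemma set2_inj (U : finType) (a b c d : U) :
  [set a; b] = [set c; d] -> (a = c /\ b = d) \/ (a = d /\ b = c).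
Proof.
move=> E.
have /set2P ha : a \in [set c; d] by rewrite -E set21.
have /set2P hb : b \in [set c; d] by rewrite -E set22.
have /set2P hc : c \in [set a; b] by rewrite E set21.
have /set2P hd : d \in [set a; b] by rewrite E set22.
by case: ha hb hc hd => ? [] ? [] ? [] ?; subst; auto.
Qed.

Section Cuts.
Variable U : finType.
Implicit Types (r : rel U) (A S : {set U}) (F : {set {set U}}).

Lemma eq_connectedb r1 r2 : r1 =2 r2 -> connectedb r1 = connectedb r2.
Proof.
by move=> E; apply: eq_forallb => x; apply: eq_forallb => y; apply: eq_connect.
Qed.

Lemma not_connectedb_closed r A u v :
  (forall a b, r a b -> a \in A -> b \in A) -> u \in A -> v \notin A ->
  ~~ connectedb r.
Proof.
move=> closedA uA; apply: contraNN => /forallP/(_ u)/forallP/(_ v)/connectP[p].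
elim: p u uA => [|w p IHp] u uA /=; first by move=> _ ->.
by case/andP => ruw; apply: IHp; apply: closedA ruw uA.
Qed.

Lemma mem_edges r x y : r x y -> [set x; y] \in edges r.
Proof. by move=> rxy; apply/imsetP; exists (x, y); rewrite ?inE. Qed.

Lemma edge_conn_le r F :
  1 < #|U| -> ~~ connectedb (remove_edges r F) -> edge_conn r <= #|F|.
Proof.
move=> U1 ncF; rewrite /edge_conn ifN -?ltnNge //.
have eqF : remove_edges r F =2 remove_edges r (F :&: edges r).
  move=> x y; rewrite /remove_edges inE; case rxy: (r x y) => //=.
  by rewrite mem_edges ?andbT.
apply: leq_trans (subset_leq_card (subsetIl F (edges r))).
by apply: bigmin_le; rewrite powersetE subsetIr -(eq_connectedb eqF).
Qed.

Lemma edge_conn_attained r :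
  1 < #|U| -> exists2 F, ~~ connectedb (remove_edges r F) & edge_conn r = #|F|.
Proof.
move=> U1; rewrite /edge_conn ifN -?ltnNge //.
apply: (bigmin_ind (K := fun k =>
  exists2 F, ~~ connectedb (remove_edges r F) & k = #|F|)) => [|F /andP[_ ncF]];
  last by exists F.
exists (edges r) => //; have [u [v [_ _ uv]]] := card_gt1P U1.
apply: (not_connectedb_closed (A := [set u]) (u := u) (v := v)); rewrite ?inE 1?eq_sym //.
by move=> a b /andP[/mem_edges ->].
Qed.

Definition cut_pairs r S : {set U * U} :=
  [set p | [&& r p.1 p.2, p.1 \in S & p.2 \notin S]].

Definition cut_edges r S : {set {set U}} :=
  [set [set p.1; p.2] | p in cut_pairs r S].

Lemma card_cut_edges r S : #|cut_edges r S| = #|cut_pairs r S|.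
Proof.
apply: card_in_imset => -[a b] [c d]; rewrite !inE /= => /and3P[_ aS _] /and3P[_ _ dS].
by case/set2_inj => [[-> ->] | [ad _]] //; move: dS; rewrite -ad aS.
Qed.

Lemma mem_cut_edges r S p q : symmetric r -> r p q -> (p \in S) != (q \in S) ->
  [set p; q] \in cut_edges r S.
Proof.
move=> rsym rpq; case pS: (p \in S); case qS: (q \in S) => // _; apply/imsetP.
  by exists (p, q); rewrite // inE rpq pS qS.
by exists (q, p); rewrite /= 1?setUC // inE -rsym rpq pS qS.
Qed.

Lemma cut_edges_disconnect r S u v :
  u \in S -> v \notin S -> ~~ connectedb (remove_edges r (cut_edges r S)).
Proof.
apply: not_connectedb_closed => a b /andP[rab abF] aS.
by apply: contraR abF => bS; apply/imsetP; exists (a, b); rewrite // inE rab aS.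
Qed.

Lemma disconnecting_set_cut r F :
  ~~ connectedb (remove_edges r F) ->
  exists S u v, [/\ u \in S, v \notin S & cut_edges r S \subset F].
Proof.
case/forallPn => u /forallPn[v ncuv].
exists [set w | connect (remove_edges r F) u w], u, v; rewrite !inE connect0 ncuv.
split=> //; apply/subsetP => s /imsetP[[a b]]; rewrite !inE /= => /and3P[rab ua vb] ->.
apply: contraR vb => abF.
by apply: connect_trans ua (connect1 _); rewrite /remove_edges rab.
Qed.

Lemma edge_conn_le_cut r S u v :
  u \in S -> v \notin S -> edge_conn r <= #|cut_edges r S|.
Proof.
move=> uS vS; apply: edge_conn_le (cut_edges_disconnect r uS vS).
by apply/card_gt1P; exists u, v; split=> //; apply: contraNneq vS => <-.
Qed.

Lemma edge_conn_min_cut r : 1 < #|U| ->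
  exists S u v, [/\ u \in S, v \notin S & #|cut_edges r S| = edge_conn r].
Proof.
move=> U1; have [F ncF eF] := edge_conn_attained r U1.
have [S [u [v [uS vS cutF]]]] := disconnecting_set_cut ncF.
exists S, u, v; split=> //; apply/eqP; rewrite eqn_leq (edge_conn_le_cut r uS vS) andbT eF.
exact: subset_leq_card.
Qed.

Lemma card_cut_pairs_set1 r p : #|cut_pairs r [set p]| <= #|[set q | r p q]|.
Proof.
apply: leq_trans (leq_imset_card (pair p) _); apply/subset_leq_card/subsetP.
move=> -[a b]; rewrite !inE /= => /and3P[rab /eqP ap _].
by apply/imsetP; exists b; rewrite ?inE -?ap.
Qed.

End Cuts.

Lemma min_deg_le (T : finType) (e : rel T) x : min_deg e <= degree e x.
Proof. exact: bigmin_le. Qed.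

Lemma degree_lt_card (T : finType) (e : rel T) x : irreflexive e -> degree e x < #|T|.
Proof.
move=> irr; rewrite /degree -cardsT; apply: proper_card; apply/properP.
by split; [exact: subsetT | exists x; rewrite ?inE ?irr].
Qed.

Lemma min_deg_lt_card (T : finType) (e : rel T) :
  irreflexive e -> 0 < #|T| -> min_deg e < #|T|.
Proof.
by move=> irr /card_gt0P[x _]; apply: leq_ltn_trans (min_deg_le e x) (degree_lt_card x irr).
Qed.

Lemma min_deg_attained (T : finType) (e : rel T) :
  irreflexive e -> 0 < #|T| -> exists x, min_deg e = degree e x.
Proof.
move=> irr T0.
have : #|T| <= min_deg e \/ exists x, min_deg e = degree e x.
  apply: (bigmin_ind (K := fun k => #|T| <= k \/ exists x, k = degree e x)).
    by left.
  by move=> x _; right; exists x.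
by case=> //; rewrite leqNgt min_deg_lt_card.
Qed.

Lemma card_offdiag n : #|[set ij : 'I_n * 'I_n | ij.1 != ij.2]| = n * (n - 1).
Proof.
have -> : [set ij : 'I_n * 'I_n | ij.1 != ij.2] = ~: [set (i, i) | i : 'I_n].
  apply/setP => -[i j]; rewrite !inE /=; apply/idP/idP.
    by move=> ij; apply/imsetP => -[k _ [ei ej]]; rewrite ei ej eqxx in ij.
  by apply: contra => /eqP ->; apply: imset_f.
have := cardsC [set (i, i) | i : 'I_n].
rewrite card_prod card_ord card_imset ?card_ord; last by move=> a b [].
by move=> h; rewrite mulnBr muln1 -h addKn.
Qed.

Lemma card_mismatch n (P Q : pred 'I_n) i1 i2 : 2 < n -> P i1 -> ~~ P i2 ->
  n - 1 <= #|[set ij : 'I_n * 'I_n | (ij.1 != ij.2) && (P ij.1 != Q ij.2)]|.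
Proof.
move=> n3 Pi1 Pi2; set C := [set ij | _].
have unmatched j : j \notin snd @: C -> forall i, i != j -> P i = Q j.
  move=> jC i ij; apply/eqP; apply: contraNT jC => PQ.
  by apply/imsetP; exists (i, j); rewrite ?inE ?ij.
have unmatched_le1 : #|~: (snd @: C)| <= 1.
  apply/card_le1_eqP => j1 j2; rewrite !inE => /unmatched m1 /unmatched m2.
  apply/eqP/negPn/negP => j12.
  have /properP[_ [k _]] : [set j1; j2] \proper [set: 'I_n].
    by rewrite properEcard subsetT cardsT card_ord cards2 (leq_ltn_trans _ n3) // ltnS leq_b1.
  rewrite !inE negb_or => /andP[kj1 kj2].
  have Pconst i : P i = Q j1.
    have [-> | ij1] := eqVneq i j1; last exact: m1.
    by rewrite (m2 j1) 1?eq_sym // -(m2 _ kj2) m1.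
  by move: Pi2; rewrite Pconst -(Pconst i1) Pi1.
rewrite leq_subLR -{1}(card_ord n) -(cardsC (snd @: C)) addnC leq_add //.
exact: leq_imset_card.
Qed.

Lemma direct_prod_sym (T1 T2 : finType) (e1 : rel T1) (e2 : rel T2) :
  symmetric e1 -> symmetric e2 -> symmetric (direct_prod e1 e2).
Proof. by move=> s1 s2 p q; rewrite /direct_prod s1 s2. Qed.

Lemma Kn_sym n : symmetric (Kn_rel n).
Proof. by move=> i j; rewrite /Kn_rel eq_sym. Qed.

Section ProductWithComplete.
Variables (n : nat) (T : finType) (e : rel T).
Local Notation eK := (direct_prod e (Kn_rel n)).

Lemma card_nbr_prod x i : #|[set q | eK (x, i) q]| = degree e x * (n - 1).
Proof.
have -> : [set q | eK (x, i) q] = setX [set y | e x y] [set~ i].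
  by apply/setP => -[y j]; rewrite !inE /direct_prod /Kn_rel /= eq_sym.
by rewrite cardsX cardsC1 card_ord subn1.
Qed.

Lemma card_cut_pairs_fibres (A : {set T}) :
  #|cut_pairs eK (setX A [set: 'I_n])| = #|cut_pairs e A| * (n * (n - 1)).
Proof.
pose f (t : (T * T) * ('I_n * 'I_n)) := ((t.1.1, t.2.1), (t.1.2, t.2.2)).
have f_inj : injective f by move=> [[? ?] [? ?]] [[? ?] [? ?]] [-> -> -> ->].
rewrite -card_offdiag -cardsX -(card_imset _ f_inj).
apply: eq_card => -[[x i] [y j]].
apply/idP/imsetP => [|[[[x' y'] [i' j']] + [-> -> -> ->]]];
  rewrite !inE /direct_prod /Kn_rel /= !andbT.
- by case/and3P => /andP[exy ij] xA yA; exists ((x, y), (i, j)); rewrite ?inE /= ?exy ?xA ?yA.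
- by case/andP => /and3P[-> -> ->] ->.
Qed.

Lemma edge_conn_prod_le_deg : 1 < n -> irreflexive e -> 0 < #|T| ->
  edge_conn eK <= (n - 1) * min_deg e.
Proof.
move=> n1 irr T0; have [x ->] := min_deg_attained irr T0.
pose i0 : 'I_n := Ordinal (ltnW n1); pose i1 : 'I_n := Ordinal n1.
have x_i0 : (x, i0) \in [set (x, i0)] by rewrite set11.
have x_i1 : (x, i1) \notin [set (x, i0)] by rewrite inE xpair_eqE eqxx.
apply: leq_trans (edge_conn_le_cut eK x_i0 x_i1) _.
by rewrite card_cut_edges (leq_trans (card_cut_pairs_set1 _ _)) // card_nbr_prod mulnC.
Qed.

Lemma edge_conn_prod_le_conn : 1 < n -> irreflexive e -> 0 < #|T| ->
  edge_conn eK <= n * (n - 1) * edge_conn e.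
Proof.
move=> n1 irr T0; have [T1 | T1] := leqP #|T| 1.
  apply: leq_trans (edge_conn_prod_le_deg n1 irr T0) _.
  have := leq_trans (min_deg_lt_card irr T0) T1.
  by rewrite ltnS leqn0 => /eqP ->; rewrite muln0.
have [A [u [v [uA vA <-]]]] := edge_conn_min_cut e T1.
pose i0 : 'I_n := Ordinal (ltnW n1).
have u_i0 : (u, i0) \in setX A [set: 'I_n] by rewrite in_setX uA in_setT.
have v_i0 : (v, i0) \notin setX A [set: 'I_n] by rewrite in_setX (negbTE vA).
rewrite card_cut_edges mulnC -card_cut_pairs_fibres -card_cut_edges.
exact: edge_conn_le_cut u_i0 v_i0.
Qed.

Lemma cut_prod_ge_split_fibre (S : {set T * 'I_n}) x i j :
  2 < n -> symmetric e -> irreflexive e -> (x, i) \in S -> (x, j) \notin S ->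
  (n - 1) * degree e x <= #|cut_edges eK S|.
Proof.
move=> n3 esym irr xiS xjS.
pose mismatched y := [set ij : 'I_n * 'I_n |
  (ij.1 != ij.2) && (((x, ij.1) \in S) != ((y, ij.2) \in S))].
pose crossing := [set t : T * ('I_n * 'I_n) | e x t.1 && (t.2 \in mismatched t.1)].
have card_crossing : degree e x * (n - 1) <= #|crossing|.
  rewrite -sum1_card; under eq_bigl => t do rewrite inE.
  rewrite -(pair_big_dep (fun y => e x y) (fun y ij => ij \in mismatched y) (fun _ _ => 1)) /=.
  rewrite /degree -sum_nat_const; under eq_bigl => y do rewrite inE.
  apply: leq_sum => y _; rewrite sum1_card.
  exact: (@card_mismatch n (fun k => (x, k) \in S) (fun k => (y, k) \in S) i j n3 xiS xjS).
rewrite mulnC; apply: leq_trans card_crossing _.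
rewrite -(card_in_imset (f := fun t => [set (x, t.2.1); (t.1, t.2.2)])).
  apply/subset_leq_card/subsetP => s /imsetP[[y [i' j']]].
  rewrite !inE /= => /and3P[exy ij mis'] ->.
  apply: mem_cut_edges mis'; first exact: direct_prod_sym esym (@Kn_sym n).
  by rewrite /direct_prod /Kn_rel /= exy.
move=> [y [i1 j1]] [y' [i2 j2]]; rewrite !inE /= => /andP[exy _] /andP[exy' _].
case/set2_inj => [[[->] [-> ->]] // | [[ey _] _]].
by rewrite -ey irr in exy'.
Qed.

Lemma edge_conn_prod_ge : 2 < n -> symmetric e -> irreflexive e -> 0 < #|T| ->
  minn (n * (n - 1) * edge_conn e) ((n - 1) * min_deg e) <= edge_conn eK.
Proof.
move=> n3 esym irr T0.
have V1 : 1 < #|{: T * 'I_n}|.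
  by rewrite card_prod card_ord (leq_trans (ltnW n3) (leq_pmull _ T0)).
have [S [u [v [uS vS <-]]]] := edge_conn_min_cut eK V1.
have [/existsP[x /andP[/existsP[i xiS] /existsP[j xjS]]] | /existsPn fibred] :=
  boolP [exists x, [exists i, (x, i) \in S] && [exists j, (x, j) \notin S]].
  apply: leq_trans (geq_minr _ _) _.
  apply: leq_trans (cut_prod_ge_split_fibre n3 esym irr xiS xjS).
  by rewrite leq_mul2l min_deg_le orbT.
have fibre y k k' : (y, k) \in S -> (y, k') \in S.
  move=> ykS; apply: contraR (fibred y) => yk'S.
  by apply/andP; split; apply/existsP; [exists k | exists k'].
pose A := [set y | (y, u.2) \in S].
have SA : S = setX A [set: 'I_n].
  by apply/setP => -[y k]; rewrite !inE andbT; apply/idP/idP; apply: fibre.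
have uA : u.1 \in A by rewrite inE -surjective_pairing.
have vA : v.1 \notin A.
  by rewrite inE; apply: contra vS => /(fibre _ _ v.2); rewrite -surjective_pairing.
apply: leq_trans (geq_minl _ _) _.
rewrite SA card_cut_edges card_cut_pairs_fibres mulnC leq_mul2r -card_cut_edges.
by rewrite (edge_conn_le_cut e uA vA) orbT.
Qed.

End ProductWithComplete.

Unset Implicit Arguments. Set Strict Implicit.

Theorem corollary1 (n : nat) (T : finType) (e : rel T) :
  3 <= n -> symmetric e -> irreflexive e -> 0 < #|T| ->
  edge_conn (direct_prod e (Kn_rel n)) =
  minn (n * (n - 1) * edge_conn e) ((n - 1) * min_deg e).
Proof.
move=> n3 esym irr T0; apply/eqP; rewrite eqn_leq edge_conn_prod_ge // andbT.
by rewrite leq_min edge_conn_prod_le_conn ?edge_conn_prod_le_deg // ltnW.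
Qed.
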